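(* Let $0<\mu<L_{\max}^{-1}$ with $L_{\max}=\max_i\|A_i\|_2^2$, and let $\{x^n\}$ be generated by GAITA (as in the context) from an arbitrary $x^0\in\mathbf{R}^N$. Then $\{x^n\}$ is bounded, for every $n\in\mathbf{N}$ $$\sum_{k=0}^n\|x^{k+1}-x^k\|_2^2\leq\frac{2\mu}{1-\mu L_{\max}}T_\lambda(x^0),$$ and $\|x^n-x^{n+1}\|_2\to0$ as $n\to\infty$.
   Context: Let $A\in\mathbf{R}^{m\times N}$ have columns $A_1,\dots,A_N$, $y\in\mathbf{R}^m$, $\lambda>0$, $q\in(0,1)$, and $T_\lambda(x)=\frac12\|Ax-y\|_2^2+\lambda\sum_{i=1}^N|x_i|^q$. For a step size $\mu>0$ set $\tau_{\mu,q}=\frac{2-q}{2-2q}(2\lambda\mu(1-q))^{\frac{1}{2-q}}$ and $\eta_{\mu,q}=(2\lambda\mu(1-q))^{\frac{1}{2-q}}$. For $z\in\mathbf{R}$ let $prox_{\mu,\lambda|\cdot|^q}(z)=\arg\min_{v\in\mathbf{R}}\{\frac{(z-v)^2}{2\mu}+\lambda|v|^q\}$ (a single point when $|z|\neq\tau_{\mu,q}$). Define $\mathcal{T}(z,w)$ as the unique element of $prox_{\mu,\lambda|\cdot|^q}(z)$ if $|z|\neq\tau_{\mu,q}$, and, if $|z|=\tau_{\mu,q}$, as $sgn(z)\eta_{\mu,q}$ when $w\neq0$ and $0$ when $w=0$ ($sgn(0)=0$). GAITA: given $x^0\in\mathbf{R}^N$, for $n=0,1,2,\dots$ let $i=(n\bmod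 N)+1$, $z_i^n=x_i^n-\mu A_i^T(Ax^n-y)$, $x_i^{n+1}=\mathcal{T}(z_i^n,x_i^n)$, $x_j^{n+1}=x_j^n$ for $j\neq i$. *)

From HB Require Import structures.
From mathcomp Require Import all_boot all_order all_algebra.
From mathcomp Require Import all_classical all_reals all_analysis.
Set Implicit Arguments. Unset Strict Implicit. Unset Printing Implicit Defensive.
Import Order.TTheory GRing.Theory Num.Theory.
Import numFieldNormedType.Exports.
Local Open Scope ring_scope.

Section GAITA.
Variable R : realType.

Definition sqnorm (n : nat) (v : 'cV[R]_n) : R := \sum_(j < n) (v j 0) ^+ 2.

Definition colsq (m N : nat) (A : 'M[R]_(m, N)) (i : 'I_N) : R :=
  \sum_(k < m) (A k i) ^+ 2.

Definition Lmax (m N : nat) (A : 'M[R]_(m, N)) : R :=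
  \big[Num.max/0]_(i < N) colsq A i.

Definition Tlam (m N : nat) (A : 'M[R]_(m, N)) (y : 'cV[R]_m) (lam q : R)
  (x : 'cV[R]_N) : R :=
  2^-1 * sqnorm (A *m x - y) + lam * \sum_(i < N) (`|x i 0| `^ q).

Definition tau (mu lam q : R) : R :=
  (2 - q) / (2 - 2 * q) * (2 * lam * mu * (1 - q)) `^ (1 / (2 - q)).

Definition eta (mu lam q : R) : R :=
  (2 * lam * mu * (1 - q)) `^ (1 / (2 - q)).

Definition in_prox (mu lam q z v : R) : Prop :=
  forall w : R,
    (z - v) ^+ 2 / (2 * mu) + lam * (`|v| `^ q)
    <= (z - w) ^+ 2 / (2 * mu) + lam * (`|w| `^ q).

(* v = T(z, w): the unique prox point when |z| <> tau, and the
   tie-breaking rule when |z| = tau *)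
Definition T_rel (mu lam q z w v : R) : Prop :=
  if `|z| != tau mu lam q then in_prox mu lam q z v
  else v = (if w != 0 then Num.sg z * eta mu lam q else 0).

(* the sequence x is generated by GAITA: at step n the coordinate
   i = n mod N (0-based) is updated, the others are kept *)
Definition GAITA_seq (m N : nat) (A : 'M[R]_(m, N)) (y : 'cV[R]_m)
  (mu lam q : R) (x : nat -> 'cV[R]_N) : Prop :=
  forall (n : nat) (j : 'I_N),
    if (nat_of_ord j == (n %% N)%N) then
      let z := x n j 0 - mu * \sum_(k < m) A k j * (A *m x n - y) k 0 in
      T_rel mu lam q z (x n j 0) (x n.+1 j 0)
    else x n.+1 j 0 = x n j 0.

End GAITA.

(* Each GAITA step is a coordinate proximal-gradient step. Since the
   objective is quadratic in the updated coordinate i with curvature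
   ||A_i||^2 <= L_max, an exact minimizer of the prox subproblem decreases
   T_lambda by at least (1 - mu L_max)/(2 mu) times the squared step.  The
   tie-breaking rule at |z| = tau is harmless because there both 0 and
   sgn(z) eta minimize the subproblem; this is the equality case of the
   weighted AM-GM inequality (1-q) a^2 + eta^(2-q) a^q >= (2-q) eta a.
   Telescoping the descent gives the bound on the squared steps, which
   therefore tend to 0; boundedness follows from lambda |x_j|^q <= T_lambda(x^n)
   <= T_lambda(x^0). *)
From Pilot Require Import Defs.
From HB Require Import structures.
From mathcomp Require Import all_boot all_order all_algebra.
From mathcomp Require Import all_classical all_reals all_analysis.
From mathcomp.algebra_tactics Require Import ring lra.
Import Order.TTheory GRing.Theory Num.Theory.
Import numFieldNormedType.Exports.
Set Implicit Arguments.
Unset Strict Implicit.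
Unset Printing Implicit Defensive.

Local Open Scope classical_set_scope.
Local Open Scope ring_scope.

Section WeightedAMGM.
Variable R : realType.

Lemma tangent_powR_ineq (q t : R) : q <= 1 -> 0 < t ->
  2 - q <= (1 - q) * t + t `^ (q - 1).
Proof.
move=> q1 t0.
have tE : t = expR (ln t) by rewrite lnK.
have tqE : t `^ (q - 1) = expR ((q - 1) * ln t) by rewrite /powR gt_eqF.
have lin_t : (1 - q) * (1 + ln t) <= (1 - q) * t.
  by rewrite ler_wpM2l ?subr_ge0 // [leRHS]tE expR_ge1Dx.
have := expR_ge1Dx ((q - 1) * ln t); rewrite -tqE; lra.
Qed.

Lemma weighted_amgm (q e a : R) : q <= 1 -> 0 < e -> 0 <= a ->
  (2 - q) * e * a <= (1 - q) * a ^+ 2 + e `^ (2 - q) * a `^ q.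
Proof.
move=> q1 e0; rewrite le0r => /predU1P[->|a0].
  by rewrite mulr0 expr0n /= mulr0 add0r mulr_ge0 ?powR_ge0.
pose t := a / e; have t0 : 0 < t by rewrite divr_gt0.
have aE : a = e * t by rewrite /t mulrCA divff ?gt_eqF ?mulr1.
have e2 : e `^ (2 - q) * e `^ q = e ^+ 2.
  by rewrite -powRD ?(gt_eqF e0) ?implybT // subrK (powR_mulrn 2 (ltW e0)).
have tq : t `^ q = t * t `^ (q - 1).
  by rewrite -{2}[t](powRr1 (ltW t0)) -powRD ?(gt_eqF t0) ?implybT // addrC subrK.
rewrite aE (powRM _ (ltW e0) (ltW t0)) mulrA e2 tq -subr_ge0.
have -> : (1 - q) * (e * t) ^+ 2 + e ^+ 2 * (t * t `^ (q - 1)) - (2 - q) * e * (e * t)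
    = e ^+ 2 * t * ((1 - q) * t + t `^ (q - 1) - (2 - q)) by ring.
apply: mulr_ge0; first by rewrite mulr_ge0 ?sqr_ge0 // ltW.
by rewrite subr_ge0 tangent_powR_ineq.
Qed.

Lemma weighted_amgm_eq (q e : R) : 0 < e ->
  (1 - q) * e ^+ 2 + e `^ (2 - q) * e `^ q = (2 - q) * e * e.
Proof.
move=> e0; rewrite -powRD ?(gt_eqF e0) ?implybT // subrK (powR_mulrn 2 (ltW e0)); ring.
Qed.

End WeightedAMGM.

Section ProxTie.
Variables (R : realType) (mu lam q : R).
Hypotheses (mu_gt0 : 0 < mu) (lam_gt0 : 0 < lam) (q_gt0 : 0 < q) (q_lt1 : q < 1).

Definition prox_obj (z v : R) : R := (z - v) ^+ 2 / (2 * mu) + lam * (`|v| `^ q).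

Let E := 2 * lam * mu * (1 - q).
Let omq_gt0 : 0 < 1 - q. Proof. by rewrite subr_gt0. Qed.
Let tmq_gt0 : 0 < 2 - q. Proof. by have := q_lt1; lra. Qed.

Lemma eta_gt0 : 0 < Defs.eta mu lam q. Proof. by rewrite powR_gt0 // !mulr_gt0. Qed.

Lemma eta_powR : Defs.eta mu lam q `^ (2 - q) = E.
Proof.
have E_ge0 : 0 <= E by rewrite !mulr_ge0 // ltW.
by rewrite /Defs.eta -powRrM mul1r mulVf ?gt_eqF // powRr1.
Qed.

Definition prox_gap (a : R) : R :=
  a ^+ 2 - 2 * tau mu lam q * a + 2 * mu * lam * a `^ q.

Lemma prox_gap_amgm (a : R) :
  (1 - q) * prox_gap a = (1 - q) * a ^+ 2
    + Defs.eta mu lam q `^ (2 - q) * a `^ q - (2 - q) * Defs.eta mu lam q * a.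
Proof.
rewrite eta_powR /prox_gap /tau -/(Defs.eta mu lam q) /E.
by field; apply: lt0r_neq0; have := q_lt1; lra.
Qed.

Lemma prox_gap_ge0 (a : R) : 0 <= a -> 0 <= prox_gap a.
Proof.
move=> a0; rewrite -(pmulr_rge0 _ omq_gt0) prox_gap_amgm subr_ge0.
by rewrite weighted_amgm ?eta_gt0 // ltW.
Qed.

Lemma prox_gap_eta : prox_gap (Defs.eta mu lam q) = 0.
Proof.
apply: (mulfI (lt0r_neq0 omq_gt0)).
by rewrite prox_gap_amgm weighted_amgm_eq ?eta_gt0 // mulr0 subrr.
Qed.

Lemma prox_obj_sub0 (z w : R) : prox_obj z w - prox_obj z 0
  = (w ^+ 2 - 2 * (z * w) + 2 * mu * lam * `|w| `^ q) / (2 * mu).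
Proof.
by rewrite /prox_obj normr0 powR0 ?gt_eqF // mulr0 addr0; field; rewrite gt_eqF.
Qed.

Section Tie.
Variable z : R.
Hypothesis z_tau : `|z| = tau mu lam q.

Lemma in_prox_tie0 : in_prox mu lam q z 0.
Proof.
move=> w; rewrite -subr_ge0 -/(prox_obj z w) -/(prox_obj z 0) prox_obj_sub0.
apply: divr_ge0; last by rewrite mulr_ge0 // ltW.
have zw : z * w <= tau mu lam q * `|w| by rewrite -z_tau -normrM real_ler_norm ?num_real.
have := prox_gap_ge0 (normr_ge0 w); rewrite /prox_gap real_normK ?num_real //; lra.
Qed.

Lemma in_prox_tie_eta : in_prox mu lam q z (Num.sg z * Defs.eta mu lam q).
Proof.
have tau_gt0 : 0 < tau mu lam q.
  by rewrite mulr_gt0 ?divr_gt0 ?eta_gt0 //; have := q_lt1; lra.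
have z0 : z != 0 by rewrite -normr_gt0 z_tau.
have same : prox_obj z (Num.sg z * Defs.eta mu lam q) = prox_obj z 0.
  apply/eqP; rewrite -subr_eq0 prox_obj_sub0 normrM normr_sg z0 mul1r.
  rewrite gtr0_norm ?eta_gt0 // exprMn sqr_sg z0 mul1r [z * _]mulrA [z * _]mulrC.
  by rewrite -normrEsg z_tau mulrA -/(prox_gap _) prox_gap_eta mul0r.
by move=> w; rewrite -/(prox_obj z _) same; exact: in_prox_tie0.
Qed.

End Tie.

Lemma T_rel_in_prox (z w v : R) : T_rel mu lam q z w v -> in_prox mu lam q z v.
Proof.
rewrite /T_rel; case: ifPn => // /negPn/eqP z_tau ->.
by case: ifP => _; [exact: in_prox_tie_eta | exact: in_prox_tie0].
Qed.

End ProxTie.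

Section Norms.
Variable R : realType.

Lemma sqnorm_ge0 n (v : 'cV[R]_n) : 0 <= sqnorm v.
Proof. by apply: sumr_ge0 => j _; apply: sqr_ge0. Qed.

Lemma sqnormN n (v : 'cV[R]_n) : sqnorm (- v) = sqnorm v.
Proof. by apply: eq_bigr => j _; rewrite mxE sqrrN. Qed.

Lemma colsq_le_Lmax m N (A : 'M[R]_(m, N)) i : colsq A i <= Lmax A.
Proof. by rewrite /Lmax (bigD1 i) //= le_max lexx. Qed.

Variables (m N : nat) (A : 'M[R]_(m, N)) (y : 'cV[R]_m) (lam q : R).

Lemma Tlam_ge0 v : 0 <= lam -> 0 <= Tlam A y lam q v.
Proof.
move=> l0; rewrite /Tlam addr_ge0 // ?mulr_ge0 ?sqnorm_ge0 //.
by apply: sumr_ge0 => j _; apply: powR_ge0.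
Qed.

Lemma Tlam_sublevel_sqnorm (v : 'cV[R]_N) M : 0 < lam -> 0 < q ->
  Tlam A y lam q v <= M -> sqnorm v <= ((M / lam) `^ q^-1) ^+ 2 *+ N.
Proof.
move=> lam0 q0 vM; rewrite /sqnorm -[N in _ *+ N]card_ord -sumr_const.
apply: ler_sum => j _; rewrite -real_normK ?num_real //.
have pen_j : `|v j 0| `^ q <= M / lam.
  rewrite ler_pdivlMr // mulrC; apply: le_trans vM.
  rewrite /Tlam (bigD1 j) //= mulrDr addrCA lerDl addr_ge0 //.
    by rewrite mulr_ge0 ?sqnorm_ge0.
  by apply: mulr_ge0; [exact: ltW | apply: sumr_ge0 => i _; apply: powR_ge0].
have Mlam_ge0 : 0 <= M / lam := le_trans (powR_ge0 _ _) pen_j.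
have abs_j : `|v j 0| <= (M / lam) `^ q^-1.
  rewrite -[leLHS](powRr1 (normr_ge0 _)) -(mulfV (lt0r_neq0 q0)) powRrM.
  by apply: ge0_ler_powR; rewrite ?nnegrE ?invr_ge0 ?powR_ge0 // ltW.
by rewrite lerXn2r ?nnegrE ?powR_ge0.
Qed.

End Norms.

Section CoordinateUpdate.
Variables (R : realType) (m N : nat) (A : 'M[R]_(m, N)) (y : 'cV[R]_m).
Variables (x x' : 'cV[R]_N) (i : 'I_N).
Hypothesis off_i : forall j, j != i -> x' j 0 = x j 0.

Let t := x' i 0 - x i 0.
Let g := \sum_(k < m) A k i * (A *m x - y) k 0.

Lemma residual_update k : (A *m x' - y) k 0 = (A *m x - y) k 0 + A k i * t.
Proof.
rewrite !mxE (bigD1 i) //= [in RHS](bigD1 i) //=.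
rewrite (eq_bigr (fun j => A k j * x j 0)); last by move=> j /off_i ->.
rewrite /t; ring.
Qed.

Lemma sqnorm_residual_update :
  sqnorm (A *m x' - y) = sqnorm (A *m x - y) + 2 * t * g + t ^+ 2 * colsq A i.
Proof.
rewrite /sqnorm /colsq /g (eq_bigr (fun k => (A *m x - y) k 0 ^+ 2
   + 2 * t * (A k i * (A *m x - y) k 0) + t ^+ 2 * A k i ^+ 2)).
  by rewrite !big_split /= -!mulr_sumr.
by move=> k _; rewrite residual_update; ring.
Qed.

Lemma penalty_update q : \sum_(j < N) `|x' j 0| `^ q
  = \sum_(j < N) `|x j 0| `^ q - `|x i 0| `^ q + `|x' i 0| `^ q.
Proof.
rewrite (bigD1 i) //= [in RHS](bigD1 i) //=.
rewrite (eq_bigr (fun j => `|x j 0| `^ q)); last by move=> j /off_i ->.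
ring.
Qed.

Lemma sqnorm_coord_update : sqnorm (x' - x) = t ^+ 2.
Proof.
rewrite /sqnorm (bigD1 i) //= big1 ?addr0 ?mxE //.
by move=> j /off_i; rewrite !mxE => ->; rewrite subrr expr0n.
Qed.

Lemma Tlam_coord_descent (mu lam q : R) : 0 < mu ->
  in_prox mu lam q (x i 0 - mu * g) (x' i 0) ->
  Tlam A y lam q x' + (1 / (2 * mu) - colsq A i / 2) * t ^+ 2 <= Tlam A y lam q x.
Proof.
move=> mu0 /(_ (x i 0)); rewrite -subr_ge0 => prox.
rewrite -subr_ge0 /Tlam sqnorm_residual_update penalty_update.
by move: prox; congr (0 <= _); rewrite /t; field; rewrite gt_eqF.
Qed.

End CoordinateUpdate.

Lemma cvg0_nneg_bounded_series (R : realType) (u : R ^nat) (M : R) :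
  (forall n, 0 <= u n) -> (forall n, series u n <= M) -> u @ \oo --> 0.
Proof.
move=> u0 uM; apply: cvg_series_cvg_0; apply: nondecreasing_is_cvgn.
  exact: nondecreasing_series.
by exists M => _ [n _ <-].
Qed.

Section GAITAIterates.
Variables (R : realType) (m N : nat) (A : 'M[R]_(m, N)) (y : 'cV[R]_m).
Variables (lam q mu : R) (x : nat -> 'cV[R]_N).
Hypotheses (N_gt0 : (0 < N)%N) (lam_gt0 : 0 < lam) (q_gt0 : 0 < q) (q_lt1 : q < 1).
Hypotheses (mu_gt0 : 0 < mu) (mu_Lmax : mu * Lmax A < 1).
Hypothesis gaita : GAITA_seq A y mu lam q x.

Let T := Tlam A y lam q.
Let c := (1 - mu * Lmax A) / (2 * mu).
Let c_gt0 : 0 < c. Proof. by rewrite divr_gt0 ?subr_gt0 ?mulr_gt0. Qed.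
Let T_ge0 v : 0 <= T v. Proof. by apply: Tlam_ge0; exact: ltW. Qed.

Lemma gaita_descent n : T (x n.+1) + c * sqnorm (x n.+1 - x n) <= T (x n).
Proof.
pose i := Ordinal (ltn_pmod n N_gt0).
have off_i j : j != i -> x n.+1 j 0 = x n j 0.
  move=> ji; have := gaita n j; case: eqP => // ji'.
  by case/eqP: ji; apply: val_inj.
have prox : in_prox mu lam q
    (x n i 0 - mu * \sum_(k < m) A k i * (A *m x n - y) k 0) (x n.+1 i 0).
  by have := gaita n i; rewrite eqxx; exact: T_rel_in_prox.
have := Tlam_coord_descent off_i mu_gt0 prox.
rewrite (sqnorm_coord_update off_i).
have c_le : c <= 1 / (2 * mu) - colsq A i / 2.
  have -> : c = 1 / (2 * mu) - Lmax A / 2 by rewrite /c; field; rewrite gt_eqF.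
  by have := colsq_le_Lmax A i; lra.
have := ler_wpM2r (sqr_ge0 (x n.+1 i 0 - x n i 0)) c_le; rewrite /T; lra.
Qed.

Lemma gaita_telescope n :
  T (x n.+1) + c * \sum_(k < n.+1) sqnorm (x k.+1 - x k) <= T (x 0%N).
Proof.
elim: n => [|n IH]; first by rewrite big_ord1; exact: gaita_descent.
rewrite big_ord_recr /= mulrDr; have := gaita_descent n.+1; lra.
Qed.

Lemma gaita_sum_sq_steps n :
  \sum_(k < n.+1) sqnorm (x k.+1 - x k) <= 2 * mu / (1 - mu * Lmax A) * T (x 0%N).
Proof.
rewrite -(ler_pM2l c_gt0).
have -> : c * (2 * mu / (1 - mu * Lmax A) * T (x 0%N)) = T (x 0%N).
  by rewrite /c; field; rewrite !lt0r_neq0 ?subr_gt0.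
by have := gaita_telescope n; have := T_ge0 (x n.+1); lra.
Qed.

Lemma gaita_Tlam_le n : T (x n) <= T (x 0%N).
Proof.
case: n => [//|n]; have := gaita_telescope n.
have : 0 <= c * \sum_(k < n.+1) sqnorm (x k.+1 - x k).
  by rewrite mulr_ge0 ?(ltW c_gt0) // sumr_ge0 // => k _; exact: sqnorm_ge0.
lra.
Qed.

Lemma gaita_steps_cvg0 : (fun n => Num.sqrt (sqnorm (x n - x n.+1))) @ \oo --> 0.
Proof.
rewrite -sqrtr0; apply: (continuous_cvg _ (@sqrt_continuous R 0)).
apply: (@cvg0_nneg_bounded_series _ _ (2 * mu / (1 - mu * Lmax A) * T (x 0%N))).
  by move=> n; exact: sqnorm_ge0.
case=> [|n]; rewrite /series /=.
  by rewrite big_geq // mulr_ge0 ?divr_ge0 ?mulr_ge0 ?subr_ge0 // ltW.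
rewrite big_mkord; under eq_bigr do rewrite -opprB sqnormN.
exact: gaita_sum_sq_steps.
Qed.

End GAITAIterates.

Theorem mainTheorem9 (R : realType) (m N : nat) (A : 'M[R]_(m, N))
  (y : 'cV[R]_m) (lam q mu : R) (x : nat -> 'cV[R]_N) :
  (0 < N)%N -> 0 < lam -> 0 < q -> q < 1 ->
  0 < mu -> mu * Lmax A < 1 ->
  GAITA_seq A y mu lam q x ->
  (exists B : R, forall n, sqnorm (x n) <= B) /\
  (forall n : nat,
     \sum_(k < n.+1) sqnorm (x k.+1 - x k)
       <= 2 * mu / (1 - mu * Lmax A) * Tlam A y lam q (x 0%N)) /\
  ((fun n => Num.sqrt (sqnorm (x n - x n.+1))) @ \oo --> (0 : R)).
Proof.
move=> N0 lam0 q0 q1 mu0 muL gaita; split; last split.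
- exists (((Tlam A y lam q (x 0%N) / lam) `^ q^-1) ^+ 2 *+ N) => n.
  apply: Tlam_sublevel_sqnorm => //.
  exact: (gaita_Tlam_le N0 lam0 q0 q1 mu0 muL gaita).
- exact: (gaita_sum_sq_steps N0 lam0 q0 q1 mu0 muL gaita).
- exact: (gaita_steps_cvg0 N0 lam0 q0 q1 mu0 muL gaita).
Qed.
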